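(* Assume the standing assumptions, and let $p_0:(0,\infty)\to(0,\infty)$ be the inverse function of $\mathcal L$, i.e. $\mathcal L(p_0(z))=z$. Then $p_0$ is strictly superadditive: $$p_0(x+y)>p_0(x)+p_0(y)\qquad\text{for all } x,y>0.$$ In particular, $p_0(n\beta)>\sum_{j=1}^k p_0(m_j\beta)$ whenever $\beta>0$, $k\ge2$, $m_1,\dots,m_k\in\mathbb N$ and $n=m_1+\dots+m_k$.
   Context: Standing assumptions: $k:(0,\infty)\to[0,\infty)$ is locally integrable, its Laplace transform $\mathcal K(p)=\int_0^\infty e^{-pt}k(t)\,dt$ is finite for $p>0$ and is a Stieltjes function, and $\mathcal L(p)=p\mathcal K(p)$. Moreover $\mathcal K(p)\to\infty$ as $p\to0^+$, $\mathcal K(p)\to0$ as $p\to\infty$, $\mathcal L(p)\to0$ as $p\to0^+$, and $\mathcal L(p)\to\infty$ as $p\to\infty$. A Stieltjes function is $\varphi(\lambda)=a/\lambda+b+\int_{[0,\infty)}\frac{\sigma(dt)}{\lambda+t}$ with $a,b\ge0$ and $\sigma$ a Borel measure on $[0,\infty)$ with $\int(1+t)^{-1}\sigma(dt)<\infty$. Under these assumptions $\mathcal L(p)=\int_{[0,\infty)}\frac{p}{p+t}\sigma(dt)$ for such a measure, and $\mathcal L$ is a strictly increasing bijection of $(0,\infty)$ onto itself. *)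

From HB Require Import structures.
From mathcomp Require Import all_boot all_order all_algebra.
From mathcomp Require Import all_classical all_reals all_analysis.
Set Implicit Arguments. Unset Strict Implicit. Unset Printing Implicit Defensive.
Import Order.TTheory GRing.Theory Num.Theory.
Import numFieldNormedType.Exports.
Local Open Scope classical_set_scope.
Local Open Scope ring_scope.

Definition locally_integrable_pos (R : realType) (k : R -> R) : Prop :=
  forall a b : R, 0 < a -> a < b ->
    (@lebesgue_measure R).-integrable `[a, b] (EFin \o k).

Definition laplace_finite (R : realType) (k : R -> R) (p : R) : Prop :=
  (@lebesgue_measure R).-integrable `]0%R, +oo[
     (fun t => (expR (- (p * t)) * k t)%:E).

Definition laplaceK (R : realType) (k : R -> R) (p : R) : R :=
  fine (\int[@lebesgue_measure R]_(t in `]0%R, +oo[) (expR (- (p * t)) * k t)%:E)%E.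

Definition laplaceL (R : realType) (k : R -> R) (p : R) : R := p * laplaceK k p.

(* Stieltjes function on (0,oo):
   phi(l) = a/l + b + int_[0,oo) sigma(dt)/(l+t), a,b >= 0,
   sigma a Borel measure on [0,oo) (only its restriction to [0,oo) is used)
   with int_[0,oo) (1+t)^{-1} sigma(dt) < oo. *)
Definition stieltjes (R : realType) (phi : R -> R) : Prop :=
  exists (a b : R) (sigma : {measure set R -> \bar R}),
    [/\ 0 <= a, 0 <= b,
        (\int[sigma]_(t in `[0%R, +oo[) ((1 + t)^-1)%:E < +oo)%E &
        forall l : R, 0 < l ->
          phi l = a / l + b + fine (\int[sigma]_(t in `[0%R, +oo[) ((l + t)^-1)%:E)%E].

From HB Require Import structures.
From mathcomp Require Import all_boot all_order all_algebra.
From mathcomp Require Import all_classical all_reals all_analysis.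
From mathcomp Require Import measurable_realfun ring lra.
Import Order.TTheory GRing.Theory Num.Theory.
Import numFieldNormedType.Exports.
Local Open Scope classical_set_scope.
Local Open Scope ring_scope.

(** Write the Stieltjes function as [K p = a / p + b + \int sigma(dt) / (p + t)], so
    that [L p = a + b p + \int p / (p + t) sigma(dt)].  Every integrand
    [p |-> p / (p + t)] is nondecreasing and strictly subadditive, hence so is [L],
    unless [a = 0] and [sigma] vanishes on [[0, +oo[]; then [K] is the constant [b],
    which [K p --> 0] forces to be [0], contradicting [L (p0 1) = 1].  Strict
    subadditivity of the nondecreasing [L] is strict superadditivity of its right
    inverse [p0], and induction extends it to finite sums. *)

Lemma integral_gt0 {d} {T : measurableType d} {R : realType}
    (mu : {measure set T -> \bar R}) (D : set T) (f : T -> R) :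
  measurable D -> measurable_fun D f -> (forall x, D x -> 0 < f x) ->
  mu D != 0%E -> (0 < \int[mu]_(x in D) (f x)%:E)%E.
Proof.
move=> mD mf f_gt0 muD0.
rewrite lt0e integral_ge0 ?andbT; last by move=> x Dx; rewrite lee_fin ltW ?f_gt0.
apply: contra muD0 => /eqP intf0.
have mEf : measurable_fun D (EFin \o f) by exact/measurable_EFinP.
have [N [mN muN0 DN]] : ae_eq mu D (EFin \o f) (cst 0%E).
  apply/(ae_eq_integral_abs mu mD mEf); rewrite -intf0.
  by apply: eq_integral => x /[!inE] Dx; rewrite gee0_abs // lee_fin ltW ?f_gt0.
apply/eqP/(subset_measure0 _ _ _ muN0) => // x Dx; apply: DN => /(_ Dx) /=.
by move=> /eqP; rewrite eqe gt_eqF ?f_gt0.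
Qed.

Lemma lt_div_shift_subadd {R : realFieldType} (P Q t : R) :
  0 < P -> 0 < Q -> 0 <= t ->
  (P + Q) / (P + Q + t) < P / (P + t) + Q / (Q + t).
Proof.
move=> P_gt0 Q_gt0 t_ge0; rewrite mulrDl; apply: ler_ltD.
  by rewrite ler_pM2l // lef_pV2 ?posrE; lra.
by rewrite ltr_pM2l // ltf_pV2 ?posrE; lra.
Qed.

Lemma le_div_shift {R : realFieldType} (u v t : R) :
  0 < u -> u <= v -> 0 <= t -> u / (u + t) <= v / (v + t).
Proof.
move=> u_gt0 uv t_ge0.
have [ut_gt0 vt_gt0] : 0 < u + t /\ 0 < v + t by split; lra.
rewrite ler_pdivrMr // mulrAC ler_pdivlMr // !mulrDr [v * u]mulrC lerD2l.
by rewrite ler_wpM2r.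
Qed.

Lemma le_inv_shift {R : realFieldType} (l t : R) : 0 < l -> 0 <= t ->
  (l + t)^-1 <= (1 + l^-1) / (1 + t).
Proof.
move=> l_gt0 t_ge0.
rewrite ler_pdivlMr ?ltr_wpDr // mulrC ler_pdivrMr ?ltr_wpDr //.
rewrite mulrDl mul1r mulrDr mulVf ?gt_eqF //.
have : 0 <= l^-1 * t by rewrite mulr_ge0 // invr_ge0 ltW.
lra.
Qed.

Section stieltjes.
Context {R : realType}.
Local Notation halfline := (`[0%R, +oo[%classic : set R).

Lemma nonneg_halfline t : halfline t -> 0 <= t.
Proof. by rewrite /= in_itv /= andbT. Qed.

Lemma measurable_inv_shift (l : R) : 0 <= l ->
  measurable_fun halfline (fun t => (l + t)^-1).
Proof.
move=> l_ge0; apply: (eq_measurable_fun (fun t => (l + t) `^ (-1))).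
  by move=> t /[!inE] /nonneg_halfline t_ge0; rewrite powR_inv1 // addr_ge0.
apply/measurable_funTS/(measurableT_comp (measurable_powR _)).
exact: measurable_funD.
Qed.

Lemma measurable_div_shift (c l : R) : 0 <= l ->
  measurable_fun halfline (fun t => c / (l + t)).
Proof. by move=> l_ge0; apply: measurable_funM => //; exact: measurable_inv_shift. Qed.

Section stieltjes_integral.
Variable sigma : {measure set R -> \bar R}.

Definition stieltjes_integral (l : R) : R :=
  fine (\int[sigma]_(t in halfline) ((l + t)^-1)%:E)%E.

Hypothesis sigma_fin : (\int[sigma]_(t in halfline) ((1 + t)^-1)%:E < +oo)%E.

Lemma integral_inv_shift_fin_num l : 0 < l ->
  (\int[sigma]_(t in halfline) ((l + t)^-1)%:E)%E \is a fin_num.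
Proof.
move=> l_gt0; have l1_ge0 : 0 <= 1 + l^-1 by rewrite addr_ge0 // invr_ge0 ltW.
rewrite ge0_fin_numE; last first.
  apply: integral_ge0 => t /nonneg_halfline t_ge0.
  by rewrite lee_fin invr_ge0 addr_ge0 // ltW.
apply: (@le_lt_trans _ _ (\int[sigma]_(t in halfline) ((1 + l^-1) / (1 + t))%:E)%E).
  apply: ge0_le_integral => //.
  - by move=> t /nonneg_halfline t_ge0; rewrite lee_fin invr_ge0 addr_ge0 // ltW.
  - by apply/measurable_EFinP; exact: measurable_inv_shift (ltW l_gt0).
  - by apply/measurable_EFinP; exact: measurable_div_shift.
  - by move=> t /nonneg_halfline t_ge0; rewrite lee_fin le_inv_shift.
under eq_integral do rewrite EFinM.
rewrite ge0_integralZl_EFin //.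
- by rewrite lte_mul_pinfty // lee_fin.
- by move=> t /nonneg_halfline t_ge0; rewrite lee_fin invr_ge0; lra.
- by apply/measurable_EFinP; exact: measurable_inv_shift.
Qed.

Lemma mul_stieltjes_integral l : 0 < l ->
  (l * stieltjes_integral l)%:E = (\int[sigma]_(t in halfline) (l / (l + t))%:E)%E.
Proof.
move=> l_gt0; rewrite EFinM fineK ?integral_inv_shift_fin_num //.
under [RHS]eq_integral do rewrite EFinM.
rewrite ge0_integralZl_EFin ?(ltW l_gt0) //.
- by move=> t /nonneg_halfline t_ge0; rewrite lee_fin invr_ge0 addr_ge0 // ltW.
- by apply/measurable_EFinP; exact: measurable_inv_shift (ltW l_gt0).
Qed.

Lemma le_mul_stieltjes_integral u v : 0 < u -> u <= v ->
  u * stieltjes_integral u <= v * stieltjes_integral v.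
Proof.
move=> u_gt0 uv; have v_gt0 : 0 < v := lt_le_trans u_gt0 uv.
rewrite -lee_fin !mul_stieltjes_integral //.
apply: ge0_le_integral => //.
- by move=> t /nonneg_halfline t_ge0; rewrite lee_fin divr_ge0 ?addr_ge0 // ltW.
- by apply/measurable_EFinP; exact: measurable_div_shift (ltW u_gt0).
- by apply/measurable_EFinP; exact: measurable_div_shift (ltW v_gt0).
- by move=> t /nonneg_halfline t_ge0; rewrite lee_fin le_div_shift.
Qed.

Lemma lt_mul_stieltjes_integral_subadd P Q :
  sigma halfline != 0%E -> 0 < P -> 0 < Q ->
  (P + Q) * stieltjes_integral (P + Q) <
  P * stieltjes_integral P + Q * stieltjes_integral Q.
Proof.
move=> sigmaI0 P_gt0 Q_gt0; have PQ_gt0 := addr_gt0 P_gt0 Q_gt0.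
pose gap t := P / (P + t) + Q / (Q + t) - (P + Q) / (P + Q + t).
have gap_gt0 t : halfline t -> 0 < gap t.
  by move=> /nonneg_halfline t_ge0; rewrite subr_gt0 lt_div_shift_subadd.
have div_ge0 c l t : 0 < c -> 0 < l -> halfline t -> (0 <= (c / (l + t))%:E)%E.
  by move=> c_gt0 l_gt0 /nonneg_halfline t_ge0; rewrite lee_fin divr_ge0 ?addr_ge0 // ltW.
have mgap : measurable_fun halfline gap.
  by apply: measurable_funB; [apply: measurable_funD|];
    apply: measurable_div_shift; apply/ltW.
have splitE : (\int[sigma]_(t in halfline) (P / (P + t))%:E +
               \int[sigma]_(t in halfline) (Q / (Q + t))%:E =
               \int[sigma]_(t in halfline) ((P + Q) / (P + Q + t))%:E +
               \int[sigma]_(t in halfline) (gap t)%:E)%E.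
  rewrite -!ge0_integralD //.
  - by apply: eq_integral => t _; rewrite -!EFinD /gap; congr EFin; ring.
  all: try by move=> t; apply: div_ge0.
  all: try by apply/measurable_EFinP; apply: measurable_div_shift; apply/ltW.
  - by move=> t /gap_gt0 /ltW; rewrite lee_fin.
  - exact/measurable_EFinP.
rewrite -lte_fin EFinD !mul_stieltjes_integral // splitE lteDl.
  exact: integral_gt0.
by rewrite -mul_stieltjes_integral.
Qed.

Lemma stieltjes_integral_null l :
  sigma halfline = 0%E -> 0 <= l -> stieltjes_integral l = 0.
Proof.
move=> sigmaI0 l_ge0; rewrite /stieltjes_integral null_set_integral //.
by apply/measurable_EFinP; exact: measurable_inv_shift.
Qed.

Lemma le_mul_stieltjes_integral_subadd P Q : 0 < P -> 0 < Q ->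
  (P + Q) * stieltjes_integral (P + Q) <=
  P * stieltjes_integral P + Q * stieltjes_integral Q.
Proof.
move=> P_gt0 Q_gt0; have [sigmaI0|sigmaI0] := eqVneq (sigma halfline) 0%E.
  have [P_ge0 Q_ge0] := (ltW P_gt0, ltW Q_gt0).
  by rewrite !(stieltjes_integral_null _ sigmaI0) ?addr_ge0 // !mulr0 addr0.
exact/ltW/lt_mul_stieltjes_integral_subadd.
Qed.
End stieltjes_integral.

Section stieltjes_function.
Context {phi : R -> R}.
Hypothesis phi_stieltjes : stieltjes phi.

Lemma stieltjes_mul_repr :
  exists (a b : R) (sigma : {measure set R -> \bar R}),
    [/\ 0 <= a, 0 <= b,
        (\int[sigma]_(t in halfline) ((1 + t)^-1)%:E < +oo)%E &
        forall l, 0 < l -> l * phi l = a + b * l + l * stieltjes_integral sigma l].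
Proof.
case: phi_stieltjes => a [b [sigma [a_ge0 b_ge0 sigma_fin phiE]]].
exists a, b, sigma; split=> // l l_gt0.
by rewrite phiE // !mulrDr mulrC divfK ?gt_eqF // [l * b]mulrC.
Qed.

Lemma stieltjes_mul_nondecreasing u v : 0 < u -> u <= v -> u * phi u <= v * phi v.
Proof.
move=> u_gt0 uv.
case: stieltjes_mul_repr => a [b [sigma [_ b_ge0 sigma_fin mulE]]].
rewrite !mulE //; last exact: lt_le_trans uv.
rewrite -addrA -[X in _ <= X]addrA lerD2l lerD ?ler_wpM2l //.
exact: le_mul_stieltjes_integral _ sigma_fin _ _ u_gt0 uv.
Qed.

Lemma stieltjes_mul_subadd_or_const :
  (exists c, forall l, 0 < l -> phi l = c) \/
  (forall P Q, 0 < P -> 0 < Q -> (P + Q) * phi (P + Q) < P * phi P + Q * phi Q).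
Proof.
case: stieltjes_mul_repr => a [b [sigma [a_ge0 b_ge0 sigma_fin mulE]]].
have [[a0 sigmaI0]|nondegenerate] : (a = 0 /\ sigma halfline = 0%E) \/
    (0 < a \/ sigma halfline != 0%E).
  have [sigmaI0|] := eqVneq (sigma halfline) 0%E; last by right; right.
  by move: a_ge0; rewrite le_eqVlt => /predU1P [a0|a_gt0]; [left|right; left].
  left; exists b => l l_gt0; apply: (mulfI (lt0r_neq0 l_gt0)).
  rewrite mulE // a0 (stieltjes_integral_null _ _ sigmaI0 (ltW l_gt0)).
  by rewrite mulr0 add0r addr0 mulrC.
right=> P Q P_gt0 Q_gt0; rewrite !mulE ?addr_gt0 // mulrDr.
case: nondegenerate => [a_gt0|sigmaI0].
  by have := le_mul_stieltjes_integral_subadd _ sigma_fin _ _ P_gt0 Q_gt0; lra.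
by have := lt_mul_stieltjes_integral_subadd _ sigma_fin _ _ sigmaI0 P_gt0 Q_gt0; lra.
Qed.

End stieltjes_function.
End stieltjes.

Lemma superadditive_inverse {R : realDomainType} (f g : R -> R) :
  (forall u v, 0 < u -> u <= v -> f u <= f v) ->
  (forall P Q, 0 < P -> 0 < Q -> f (P + Q) < f P + f Q) ->
  (forall z, 0 < z -> 0 < g z) -> (forall z, 0 < z -> f (g z) = z) ->
  forall x y, 0 < x -> 0 < y -> g x + g y < g (x + y).
Proof.
move=> f_nondecr f_subadd g_gt0 fgK x y x_gt0 y_gt0.
rewrite ltNge; apply/negP => /(f_nondecr _ _ (g_gt0 _ (addr_gt0 x_gt0 y_gt0))).
have := f_subadd _ _ (g_gt0 _ x_gt0) (g_gt0 _ y_gt0).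
by rewrite !fgK ?addr_gt0 //; lra.
Qed.

Lemma superadditive_sum {R : realDomainType} (g : R -> R) :
  (forall x y, 0 < x -> 0 < y -> g x + g y < g (x + y)) ->
  forall n (x : 'I_n.+2 -> R), (forall j, 0 < x j) ->
  \sum_(j < n.+2) g (x j) < g (\sum_(j < n.+2) x j).
Proof.
move=> g_superadd; elim=> [|n IHn] x x_gt0.
  by rewrite !big_ord_recr !big_ord0 /= !add0r g_superadd.
rewrite big_ord_recr [X in _ < g X]big_ord_recr /=.
apply: lt_trans (g_superadd _ _ _ (x_gt0 _)); first by rewrite ltrD2r IHn.
rewrite big_ord_recl ltr_pwDl ?x_gt0 //.
by apply: sumr_ge0 => i _; exact/ltW/x_gt0.
Qed.

Theorem lemma4p1 (R : realType) (k : R -> R) (p0 : R -> R)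
  (k_ge0 : forall t : R, 0 < t -> 0 <= k t)
  (k_loc : locally_integrable_pos k)
  (K_fin : forall p : R, 0 < p -> laplace_finite k p)
  (K_stieltjes : stieltjes (laplaceK k))
  (K_0 : laplaceK k x @[x --> 0^'+] --> +oo)
  (K_oo : laplaceK k x @[x --> +oo] --> 0)
  (L_0 : laplaceL k x @[x --> 0^'+] --> 0)
  (L_oo : laplaceL k x @[x --> +oo] --> +oo)
  (p0_pos : forall z : R, 0 < z -> 0 < p0 z)
  (p0_inv : forall z : R, 0 < z -> laplaceL k (p0 z) = z) :
  (forall x y : R, 0 < x -> 0 < y -> p0 (x + y) > p0 x + p0 y) /\
  (forall (beta : R) (n : nat) (m : 'I_n -> nat),
      0 < beta -> (2 <= n)%N -> (forall j, (0 < m j)%N) ->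
      p0 ((\sum_(j < n) m j)%N%:R * beta) > \sum_(j < n) p0 ((m j)%:R * beta)).
Proof.
have [[c Kc]|L_subadd] := stieltjes_mul_subadd_or_const K_stieltjes.
  have K_c : laplaceK k x @[x --> +oo] --> c.
    by apply: cvg_near_cst; near=> x; apply: Kc; near: x; apply: nbhs_pinfty_gt.
  have c0 : c = 0 := cvg_unique (@Rhausdorff R) K_c K_oo.
  have := p0_inv _ ltr01.
  by rewrite /laplaceL Kc ?p0_pos // c0 mulr0 => /eqP; rewrite eq_sym oner_eq0.
have p0_superadd := superadditive_inverse (laplaceL k) p0
  (stieltjes_mul_nondecreasing K_stieltjes) L_subadd p0_pos p0_inv.
split=> [|beta [|[|n]] m beta_gt0 // _ m_gt0]; first exact: p0_superadd.
rewrite natr_sum mulr_suml; apply: superadditive_sum => // j.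
by rewrite mulr_gt0 ?ltr0n.
Unshelve. all: by end_near.
Qed.
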